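(* Let $d_1,\dots,d_n$ be positive square-free integers with $[\mathbb{Q}(\sqrt{d_1},\dots,\sqrt{d_n}):\mathbb{Q}]=2^n=r$, $F=\mathbb{Q}(\sqrt{d_1},\dots,\sqrt{d_n})$, let $\mathfrak{M}$ be a fractional ideal of $F$ and $\delta=\min(\mathfrak{M})$. Suppose $s\in\mathfrak{M}$, $s\ne0$, satisfies $|\sigma_j(s)|\le\delta/\sqrt{r}$ for all $j=1,\dots,r$. Then $\|\sigma(s)\|=\delta$ (so $s\in B_{\mathfrak{M}}$), $|\sigma_j(s)|=\delta/\sqrt r$ for all $j$, and $s=x\sqrt{d_T}$ for some $x\in\mathbb{Q}$ and some $T\subseteq\{1,\dots,n\}$; in particular $2^n x^2 d_T=\delta^2$, i.e. the coefficient vector of $s$ is a solution of $2^n\sum_{T'}d_{T'}X_{T'}^2=\delta^2$ with at most one nonzero coordinate.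
   Context: $\sigma_1,\dots,\sigma_r$ are the real embeddings of $F$, $\|\sigma(s)\|=\sqrt{\sum_j\sigma_j(s)^2}$, $\min(\mathfrak{M})=\min\{\|\sigma(t)\|: t\in\mathfrak{M},\ t\ne0\}$, $B_{\mathfrak{M}}=\{t\in\mathfrak{M}:\|\sigma(t)\|=\min(\mathfrak{M})\}$. For $T\subseteq\{1,\dots,n\}$, $d_T=\prod_{l\in T}d_l$ ($d_\emptyset=1$) and $\sqrt{d_T}=\prod_{l\in T}\sqrt{d_l}$; every element of $F$ is uniquely $\sum_T x_T\sqrt{d_T}$ with $x_T\in\mathbb{Q}$ (its coefficient vector). *)

From HB Require Import structures.
From mathcomp Require Import all_boot all_order all_algebra.
From mathcomp Require Import reals.
Set Implicit Arguments. Unset Strict Implicit. Unset Printing Implicit Defensive.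
Import Order.TTheory GRing.Theory Num.Theory.
Local Open Scope ring_scope.

Definition squarefree (d : nat) : Prop :=
  forall p : nat, prime p -> ~~ (p * p %| d)%N.

Definition dT (n : nat) (d : 'I_n -> nat) (T : {set 'I_n}) : nat :=
  (\prod_(l in T) d l)%N.

Definition sqdT (R : realType) (n : nat) (d : 'I_n -> nat) (T : {set 'I_n}) : R :=
  \prod_(l in T) Num.sqrt ((d l)%:R : R).

(* the element sum_T x_T sqrt(d_T) of F = Q(sqrt d_1,...,sqrt d_n), F viewed inside R *)
Definition elt (R : realType) (n : nat) (d : 'I_n -> nat) (x : {set 'I_n} -> rat) : R :=
  \sum_(T : {set 'I_n}) ratr (x T) * sqdT R d T.

(* The 2^n real embeddings of F, indexed by e : {set 'I_n} (the set of l with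
   sigma(sqrt d_l) = - sqrt d_l):  sigma_e(sum_T x_T sqrt d_T)
   = sum_T x_T (-1)^{|T cap e|} sqrt d_T.  sigma_set0 is the identity embedding. *)
Definition emb (R : realType) (n : nat) (d : 'I_n -> nat) (e : {set 'I_n})
  (x : {set 'I_n} -> rat) : R :=
  \sum_(T : {set 'I_n}) ratr (x T) * (-1) ^+ #|T :&: e| * sqdT R d T.

Definition embnorm (R : realType) (n : nat) (d : 'I_n -> nat)
  (x : {set 'I_n} -> rat) : R :=
  Num.sqrt (\sum_(e : {set 'I_n}) emb R d e x ^+ 2).

(* [F : Q] = 2^n, i.e. the 2^n spanning elements sqrt(d_T) are Q-linearly independent *)
Definition full_degree (R : realType) (n : nat) (d : 'I_n -> nat) : Prop :=
  forall x : {set 'I_n} -> rat, elt R d x = 0 -> forall T, x T = 0.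

Definition inF (R : realType) (n : nat) (d : 'I_n -> nat) (t : R) : Prop :=
  exists x : {set 'I_n} -> rat, t = elt R d x.

Definition alg_int (R : realType) (t : R) : Prop :=
  exists p : {poly int}, p \is monic /\ (map_poly (fun z : int => z%:~R) p).[t] = 0.

Definition inOF (R : realType) (n : nat) (d : 'I_n -> nat) (t : R) : Prop :=
  inF d t /\ alg_int t.

Definition frac_ideal (R : realType) (n : nat) (d : 'I_n -> nat) (M : R -> Prop) : Prop :=
  (forall t, M t -> inF d t) /\
  M 0 /\
  (forall a b, M a -> M b -> M (a + b)) /\
  (forall a m, inOF d a -> M m -> M (a * m)) /\
  (exists m, M m /\ m != 0) /\
  (exists c, [/\ inOF d c, c != 0 & forall m, M m -> inOF d (c * m)]).

Definition is_minM (R : realType) (n : nat) (d : 'I_n -> nat) (M : R -> Prop)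
  (delta : R) : Prop :=
  (exists y, [/\ M (elt R d y), elt R d y != 0 & embnorm R d y = delta]) /\
  (forall y, M (elt R d y) -> elt R d y != 0 -> delta <= embnorm R d y).

From HB Require Import structures.
From mathcomp Require Import all_boot all_order all_algebra.
From mathcomp Require Import reals.
Import Order.TTheory GRing.Theory Num.Theory.
Local Open Scope ring_scope.

(* The r = 2^n embedding values of s each have modulus at most delta/sqrt r, so
   ||sigma(s)||^2 <= delta^2; minimality of delta forces equality throughout, hence
   every |sigma_e(s)| equals |s|, i.e. sigma_e(s) = +-s.  Comparing coefficients in
   the basis (sqrt d_T)_T, sigma_e multiplies the coefficient of sqrt d_T by
   (-1)^|T cap e|, so for e = {i} all T in the support of s agree on whether they
   contain i: the support is a single set T. *)

Lemma card_setI1 (T : finType) (A : {set T}) (x : T) :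
  #|A :&: [set x]| = (x \in A).
Proof.
case: (boolP (x \in A)) => xA.
  by rewrite (setIidPr _) ?cards1 // sub1set.
rewrite (_ : _ :&: _ = set0) ?cards0 //; apply/setP => y; rewrite !inE.
by case: (y =P x) => [->|]; rewrite ?(negbTE xA) ?andbF.
Qed.

Lemma card_setT_ord (n : nat) : #|{: {set 'I_n}}| = (2 ^ n)%N.
Proof. by rewrite -cardsT -powersetT card_powerset cardsT card_ord. Qed.

Section SumOfSquares.

Variables (R : realDomainType) (I : finType) (f : I -> R) (b : R).
Hypothesis f_le : forall i, `|f i| <= b.

Lemma sqr_le_bound i : f i ^+ 2 <= b ^+ 2.
Proof.
rewrite -real_normK ?num_real // ler_sqr ?nnegrE ?f_le //.
exact: le_trans (f_le i).
Qed.

Lemma sum_sqr_le_card : \sum_i f i ^+ 2 <= #|I|%:R * b ^+ 2.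
Proof.
rewrite mulr_natl -sumr_const; apply: ler_sum => i _; exact: sqr_le_bound.
Qed.

Lemma norm_eq_bound_of_sum_sqr_ge :
  #|I|%:R * b ^+ 2 <= \sum_i f i ^+ 2 -> forall i, `|f i| = b.
Proof.
move=> sum_ge i.
have gap_sum : \sum_j (b ^+ 2 - f j ^+ 2) = 0.
  apply/eqP; rewrite eq_le sumrB sumr_const -mulr_natl subr_le0 sum_ge /=.
  by rewrite subr_ge0 sum_sqr_le_card.
have gap_ge0 j : true -> 0 <= b ^+ 2 - f j ^+ 2 by rewrite subr_ge0 sqr_le_bound.
have /eqP := psumr_eq0P gap_ge0 gap_sum (i := i) isT.
rewrite subr_eq0 eq_sym -real_normK ?num_real // eqrXn2 //; first by move/eqP.
exact: le_trans (f_le i).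
Qed.

End SumOfSquares.

Lemma coef_support_uniq (n : nat) (x : {set 'I_n} -> rat) (T1 T2 : {set 'I_n}) :
  (forall e, exists eps : rat, forall T, x T * (-1) ^+ #|T :&: e| = eps * x T) ->
  x T1 != 0 -> x T2 != 0 -> T1 = T2.
Proof.
move=> sign x1 x2; apply/setP => i.
have [eps epsE] := sign [set i].
have := epsE T1; have := epsE T2; rewrite !card_setI1 ![x _ * _]mulrC.
move=> /(mulIf x2) <- /(mulIf x1).
by case: (i \in T1); case: (i \in T2).
Qed.

Section Coefficients.

Context {R : realType} {n : nat} {d : 'I_n -> nat}.

Lemma emb_set0 (x : {set 'I_n} -> rat) : emb R d set0 x = elt R d x.
Proof.
by apply: eq_bigr => T _; rewrite setI0 cards0 expr0 mulr1.
Qed.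

Lemma sqdT_sqr (T : {set 'I_n}) : sqdT R d T ^+ 2 = (dT d T)%:R.
Proof.
rewrite /sqdT /dT -prodrXl natr_prod; apply: eq_bigr => l _.
by rewrite sqr_sqrtr ?ler0n.
Qed.

Lemma elt_single {x : {set 'I_n} -> rat} {T : {set 'I_n}} :
  (forall T', x T' = if T' == T then x T else 0) ->
  elt R d x = ratr (x T) * sqdT R d T.
Proof.
move=> xE; rewrite /elt (bigD1 T) //= big1 ?addr0 // => T' /negbTE T'T.
by rewrite xE T'T rmorph0 mul0r.
Qed.

Hypothesis hdeg : full_degree R d.

Lemma coef_sign_of_emb (x : {set 'I_n} -> rat) (e : {set 'I_n}) (eps : rat) :
  emb R d e x = ratr eps * elt R d x ->
  forall T, x T * (-1) ^+ #|T :&: e| = eps * x T.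
Proof.
move=> embE T; apply/eqP; rewrite -subr_eq0; apply/eqP.
apply: (hdeg (fun U => x U * (-1) ^+ #|U :&: e| - eps * x U)).
rewrite /elt (eq_bigr (fun U => ratr (x U) * (-1) ^+ #|U :&: e| * sqdT R d U
                               - ratr eps * (ratr (x U) * sqdT R d U))).
  by rewrite sumrB -mulr_sumr -/(emb R d e x) -/(elt R d x) embE subrr.
by move=> U _; rewrite rmorphB !rmorphM rmorphXn rmorphN1 mulrBl !mulrA.
Qed.

Lemma coef_sign_of_norm_emb {x : {set 'I_n} -> rat} {e : {set 'I_n}} :
  `|emb R d e x| = `|elt R d x| ->
  exists eps : rat, forall T, x T * (-1) ^+ #|T :&: e| = eps * x T.
Proof.
move=> /eqP; rewrite eqr_norm2 => /orP[] /eqP embE.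
  by exists 1; apply: coef_sign_of_emb; rewrite embE rmorph1 mul1r.
by exists (-1); apply: coef_sign_of_emb; rewrite embE rmorphN1 mulN1r.
Qed.

Lemma coef_single_of_norm_emb (x : {set 'I_n} -> rat) :
  (forall e, `|emb R d e x| = `|elt R d x|) -> elt R d x != 0 ->
  exists T, forall T', x T' = if T' == T then x T else 0.
Proof.
move=> normE x0.
have sign e := coef_sign_of_norm_emb (normE e).
have [T xT] : exists T, x T != 0.
  apply/existsP; apply: contraNT x0; rewrite negb_exists => /forallP x0.
  by rewrite /elt big1 // => T _; rewrite (eqP (negbNE (x0 T))) rmorph0 mul0r.
exists T => T'; case: eqP => [-> //|T'T].
by apply/eqP; apply: contraT => xT'; case: T'T; apply: coef_support_uniq sign xT' xT.
Qed.

End Coefficients.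

Theorem mainTheorem9 (R : realType) (n : nat) (d : 'I_n -> nat)
  (hdpos : forall l, (0 < d l)%N) (hdsq : forall l, squarefree (d l))
  (hdeg : full_degree R d)
  (M : R -> Prop) (hM : frac_ideal d M) (delta : R) (hdelta : is_minM d M delta)
  (s : {set 'I_n} -> rat) (hsM : M (elt R d s)) (hs0 : elt R d s != 0)
  (hsb : forall e : {set 'I_n},
      `|emb R d e s| <= delta / Num.sqrt ((2 ^ n)%N%:R)) :
  [/\ embnorm R d s = delta,
      (forall e : {set 'I_n}, `|emb R d e s| = delta / Num.sqrt ((2 ^ n)%N%:R)) &
      exists (x : rat) (T : {set 'I_n}),
        [/\ (forall T', s T' = if T' == T then x else 0),
            (2 ^ n)%N%:R * ratr x ^+ 2 * (dT d T)%:R = delta ^+ 2 &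
            (2 ^ n)%N%:R * \sum_(T' : {set 'I_n}) (dT d T')%:R * ratr (s T') ^+ 2
              = delta ^+ 2]].
Proof.
set r : R := (2 ^ n)%N%:R; set b := delta / Num.sqrt r.
have delta_ge0 : 0 <= delta by case: hdelta => [[y [_ _ <-]] _]; exact: sqrtr_ge0.
have r_b2 : r * b ^+ 2 = delta ^+ 2.
  rewrite expr_div_n sqr_sqrtr ?ler0n // mulrCA divff ?mulr1 //.
  by rewrite pnatr_eq0 expn_eq0.
have S_le : \sum_e emb R d e s ^+ 2 <= r * b ^+ 2.
  by rewrite /r -card_setT_ord sum_sqr_le_card.
have S_ge : r * b ^+ 2 <= \sum_e emb R d e s ^+ 2.
  rewrite r_b2 -[X in _ <= X]sqr_sqrtr ?sumr_ge0 // => [|e _]; last exact: sqr_ge0.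
  by rewrite ler_sqr ?nnegrE ?sqrtr_ge0 // hdelta.2.
have S_eq : \sum_e emb R d e s ^+ 2 = delta ^+ 2.
  by rewrite -r_b2; apply/eqP; rewrite eq_le S_le S_ge.
have normE : forall e, `|emb R d e s| = b.
  by apply: norm_eq_bound_of_sum_sqr_ge; rewrite // card_setT_ord.
have norm_s : embnorm R d s = delta.
  by rewrite /embnorm S_eq sqrtr_sqr ger0_norm.
have [T sE] : exists T, forall T', s T' = if T' == T then s T else 0.
  by apply: (coef_single_of_norm_emb hdeg) => // e; rewrite -emb_set0 !normE.
have single_norm : r * ratr (s T) ^+ 2 * (dT d T)%:R = delta ^+ 2.
  rewrite -r_b2 -(normE set0) real_normK ?num_real // emb_set0 (elt_single sE).
  by rewrite [in RHS]exprMn sqdT_sqr [RHS]mulrA.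
split => //; exists (s T), T; split => //.
rewrite (bigD1 T) //= big1 ?addr0 => [|T' /negbTE T'T].
  by rewrite -single_norm mulrA mulrAC.
by rewrite sE T'T rmorph0 expr0n mulr0.
Qed.
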